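(* Under the hypotheses of Theorem 1 (the closed-loop scheme of the setting below, with (i) $\mathcal P_i(0)$ feasible for all $i$ and $S_i^\ast(0)\cap S_j^\ast(0)=\emptyset$ for all $i\neq j$, (ii) nominal completion: whenever contingency variables satisfying (C1)–(C8) and (L) of $\mathcal P_i(t+1)$ exist, nominal variables exist so that (N1)–(N3) also hold, and (iii) $\ell_i^{\mathrm c}(0,0)=0$), the closed-loop execution is collision-free: $\mathcal B_i(t)\cap\mathcal B_j(t)=\emptyset$ for all $i\neq j$ and all $t\in\mathbb Z_+$.
   Context: Setting. Agents $\mathcal I=\{1,\dots,M\}$. Agent $i$ has dynamics $x_i(t+1)=f_i(x_i(t),u_i(t))$, $x_i\in\mathbb R^{n_i}$, $u_i\in\mathbb R^{m_i}$, admissible sets $\mathcal X_i\subset\mathbb R^{n_i}$, $\mathcal U_i\subset\mathbb R^{m_i}$, position $p_i=C_ix_i\in\mathbb R^{n_p}$, body radius $r_i>0$, body $\mathcal B_i(t)=\mathbb B(p_i(t),r_i)$ (closed Euclidean ball), reference state $x_i^{\mathrm{ref}}$. A deterministic safe-set generator $\Gamma_i$ assigns to each $x\in\mathcal X_i$ a ball $\Gamma_i(x)=\mathbb B(c_i(x),R_i(x))$. The active safe set at time $t$ is $S_i^\ast(t)=\mathbb B(c_i(t),R_i(t))$. $h:\mathbb R^{n_p}\to\mathbb R$ is a continuous obstacle function. Horizons $N_{\mathrm n},N_{\mathrm c}\in\mathbb Z_{>0}$. Costs: nominal stage and terminal costs $\ell_i^{\mathrm n},V_i^{\mathrm n}$,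 nonnegative offset cost $V_i^{\mathrm c}$, nonnegative contingency stage cost $\ell_i^{\mathrm c}$, weight $\gamma>0$. Problem $\mathcal P_i(t)$ (given $x_i(t)$, $S_i^\ast(t)$ and a bound $\hat J_i^{\mathrm c}(t)\ge0$): decision variables $x^{\mathrm n}_{i,(k|t)}$ ($k=0..N_{\mathrm n}$), $u^{\mathrm n}_{i,(k|t)}$ ($k=0..N_{\mathrm n}-1$), $x^{\mathrm c}_{i,(k|t)}$ ($k=0..N_{\mathrm c}$), $u^{\mathrm c}_{i,(k|t)}$ ($k=0..N_{\mathrm c}-1$), $\bar x^{\mathrm c}_i(t),\bar u^{\mathrm c}_i(t)$; write $p^\bullet_{i,(k|t)}=C_ix^\bullet_{i,(k|t)}$. Minimize $J_i=\sum_{k=0}^{N_{\mathrm n}-1}\ell_i^{\mathrm n}(x^{\mathrm n}_{i,(k|t)},u^{\mathrm n}_{i,(k|t)})+V_i^{\mathrm n}(x^{\mathrm n}_{i,(N_{\mathrm n}|t)},x_i^{\mathrm{ref}})+\gamma V_i^{\mathrm c}(\bar x^{\mathrm c}_i(t),x_i^{\mathrm{ref}})$ subject to: (N1) $x^{\mathrm n}_{i,(0|t)}=x_i(t)$; (N2) $u^{\mathrm n}_{i,(0|t)}=u^{\mathrm c}_{i,(0|t)}$; (N3) $x^{\mathrm n}_{i,(k+1|t)}=f_i(x^{\mathrm n}_{i,(k|t)},u^{\mathrm n}_{i,(k|t)})$, $x^{\mathrm n}_{i,(k+1|t)}\in\mathcal X_i$, $u^{\mathrm n}_{i,(k|t)}\in\mathcal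 U_i$ for $k=0..N_{\mathrm n}-1$; (C1) $x^{\mathrm c}_{i,(0|t)}=x_i(t)$; (C2) $x^{\mathrm c}_{i,(k+1|t)}=f_i(x^{\mathrm c}_{i,(k|t)},u^{\mathrm c}_{i,(k|t)})$ for $k=0..N_{\mathrm c}-1$; (C3) $x^{\mathrm c}_{i,(k+1|t)}\in\mathcal X_i$, $u^{\mathrm c}_{i,(k|t)}\in\mathcal U_i$ for $k=0..N_{\mathrm c}-1$; (C4) $h(p^{\mathrm c}_{i,(k|t)})\ge0$ for $k=0..N_{\mathrm c}$; (C5) $x^{\mathrm c}_{i,(N_{\mathrm c}|t)}=\bar x^{\mathrm c}_i(t)$, $\bar x^{\mathrm c}_i(t)=f_i(\bar x^{\mathrm c}_i(t),\bar u^{\mathrm c}_i(t))$, $(\bar x^{\mathrm c}_i(t),\bar u^{\mathrm c}_i(t))\in\mathcal X_i\times\mathcal U_i$; (C6) $C_i\bar x^{\mathrm c}_i(t)\in S_i^\ast(t)$; (C7) $\|p^{\mathrm c}_{i,(k|t)}-c_i(t)\|\le R_i(t)-r_i$ for $k=0..N_{\mathrm c}$; (C8) $\|p^{\mathrm c}_{i,(l|t)}-c_i(x^{\mathrm c}_{i,(k|t)})\|\le R_i(x^{\mathrm c}_{i,(k|t)})-r_i$ for all $0\le k\le l\le N_{\mathrm c}$; (L) $J_i^{\mathrm c}(t)\le\hat J_i^{\mathrm c}(t)$, where $J_i^{\mathrm c}(t):=\sum_{k=0}^{N_{\mathrm c}-1}\ell_i^{\mathrm c}(x^{\mathrm c}_{i,(k|t)}-\bar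 x^{\mathrm c}_i(t),u^{\mathrm c}_{i,(k|t)}-\bar u^{\mathrm c}_i(t))+V_i^{\mathrm c}(\bar x^{\mathrm c}_i(t),x_i^{\mathrm{ref}})$. Closed loop: at each $t$ each agent solves $\mathcal P_i(t)$, a star denotes the optimal solution, $J_i^{\mathrm c,\ast}(t)$ is $J_i^{\mathrm c}$ evaluated at it, the input $u_i(t)=u^{\mathrm c,\ast}_{i,(0|t)}=u^{\mathrm n,\ast}_{i,(0|t)}$ is applied and the state evolves exactly by $x_i(t+1)=f_i(x_i(t),u_i(t))$. Bound update: $\hat J_i^{\mathrm c}(t+1):=J_i^{\mathrm c,\ast}(t)-\ell_i^{\mathrm c}(x_i(t)-\bar x^{\mathrm c,\ast}_i(t),u_i(t)-\bar u^{\mathrm c,\ast}_i(t))$. Freeze-or-shift (FoS) update: $\tilde S_i(t+1):=\Gamma_i(x_i(t+1))$; $\chi_i(t)=1$ if some $j\neq i$ has $\tilde S_i(t+1)\cap\tilde S_j(t+1)\neq\emptyset$ or $\tilde S_i(t+1)\cap S_j^\ast(t)\neq\emptyset$, else $\chi_i(t)=0$; $S_i^\ast(t+1)=S_i^\ast(t)$ if $\chi_i(t)=1$ and $S_i^\ast(t+1)=\tilde S_i(t+1)$ if $\chi_i(t)=0$. *)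

From HB Require Import structures.
From mathcomp Require Import all_boot all_order all_algebra.
From mathcomp Require Import all_classical all_reals all_analysis.
Set Implicit Arguments. Unset Strict Implicit. Unset Printing Implicit Defensive.
Import Order.TTheory GRing.Theory Num.Theory.
Import numFieldNormedType.Exports.
Local Open Scope ring_scope.

Definition enorm (R : realType) (n : nat) (v : 'rV[R]_n) : R :=
  Num.sqrt (\sum_(k < n) (v ord0 k) ^+ 2).

Definition inball (R : realType) (n : nat) (c : 'rV[R]_n) (rho : R) (p : 'rV[R]_n) : Prop :=
  enorm (p - c) <= rho.

Definition balls_meet (R : realType) (n : nat) (c1 : 'rV[R]_n) (r1 : R)
  (c2 : 'rV[R]_n) (r2 : R) : Prop :=
  exists p, inball c1 r1 p /\ inball c2 r2 p.

(* Data of one agent; positions live in R^np.  States are row vectors, so the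
   position map p = C x is written x *m Cpos with Cpos : 'M_(nx, np). *)
Record agent (R : realType) (np : nat) := Agent {
  nx : nat;
  nu : nat;
  dynf : 'rV[R]_nx -> 'rV[R]_nu -> 'rV[R]_nx;
  Xadm : set 'rV[R]_nx;
  Uadm : set 'rV[R]_nu;
  Cpos : 'M[R]_(nx, np);
  body_r : R;
  xref : 'rV[R]_nx;
  gen_c : 'rV[R]_nx -> 'rV[R]_np;
  gen_R : 'rV[R]_nx -> R;
  lnom : 'rV[R]_nx -> 'rV[R]_nu -> R;
  Vnom : 'rV[R]_nx -> 'rV[R]_nx -> R;
  Voff : 'rV[R]_nx -> 'rV[R]_nx -> R;
  lcont : 'rV[R]_nx -> 'rV[R]_nu -> R
}.

Arguments dynf {R np} a : rename. Arguments Xadm {R np} a : rename. Arguments Uadm {R np} a : rename.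
Arguments Cpos {R np} a : rename. Arguments body_r {R np} a : rename. Arguments xref {R np} a : rename.
Arguments gen_c {R np} a : rename. Arguments gen_R {R np} a : rename. Arguments lnom {R np} a : rename.
Arguments Vnom {R np} a : rename. Arguments Voff {R np} a : rename. Arguments lcont {R np} a : rename.

Definition position (R : realType) (np : nat) (A : agent R np) (x : 'rV[R]_(nx A)) : 'rV[R]_np :=
  x *m Cpos A.

(* Decision variables of P_i(t); predicted sequences indexed by k : nat
   (only indices within the horizons matter). *)
Record sol (R : realType) (n m : nat) := Sol {
  xn : nat -> 'rV[R]_n;  un : nat -> 'rV[R]_m;
  xc : nat -> 'rV[R]_n;  uc : nat -> 'rV[R]_m;
  xbar : 'rV[R]_n;       ubar : 'rV[R]_m
}.

Section Problem.
Variables (R : realType) (np : nat) (A : agent R np).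
Local Notation S := (sol R (nx A) (nu A)).

Definition Jc (Nc : nat) (s : S) : R :=
  \sum_(k < Nc) lcont A (xc s k - xbar s) (uc s k - ubar s) + Voff A (xbar s) (xref A).

Definition Jobj (Nn : nat) (gamma : R) (s : S) : R :=
  \sum_(k < Nn) lnom A (xn s k) (un s k) + Vnom A (xn s Nn) (xref A)
  + gamma * Voff A (xbar s) (xref A).

(* (N1)-(N3) *)
Definition feas_n (Nn : nat) (x : 'rV[R]_(nx A)) (s : S) : Prop :=
  xn s 0 = x /\ un s 0 = uc s 0 /\
  (forall k, (k < Nn)%N ->
     xn s k.+1 = dynf A (xn s k) (un s k) /\ Xadm A (xn s k.+1) /\ Uadm A (un s k)).

(* (C1)-(C8) and (L); the active safe set is B(c, rho) *)
Definition feas_c (Nc : nat) (h : 'rV[R]_np -> R) (x : 'rV[R]_(nx A))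
  (c : 'rV[R]_np) (rho : R) (Jhat : R) (s : S) : Prop :=
  (* C1 *) xc s 0 = x /\
  (* C2 *) (forall k, (k < Nc)%N -> xc s k.+1 = dynf A (xc s k) (uc s k)) /\
  (* C3 *) (forall k, (k < Nc)%N -> Xadm A (xc s k.+1) /\ Uadm A (uc s k)) /\
  (* C4 *) (forall k, (k <= Nc)%N -> 0 <= h (position (xc s k))) /\
  (* C5 *) (xc s Nc = xbar s /\ xbar s = dynf A (xbar s) (ubar s)
            /\ Xadm A (xbar s) /\ Uadm A (ubar s)) /\
  (* C6 *) inball c rho (position (xbar s)) /\
  (* C7 *) (forall k, (k <= Nc)%N -> inball c (rho - body_r A) (position (xc s k))) /\
  (* C8 *) (forall k l, (k <= l)%N -> (l <= Nc)%N ->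
              inball (gen_c A (xc s k)) (gen_R A (xc s k) - body_r A) (position (xc s l))) /\
  (* L  *) Jc Nc s <= Jhat.

Definition feasible (Nn Nc : nat) (h : 'rV[R]_np -> R) (x : 'rV[R]_(nx A))
  (c : 'rV[R]_np) (rho : R) (Jhat : R) (s : S) : Prop :=
  feas_n Nn x s /\ feas_c Nc h x c rho Jhat s.

Definition optimal (Nn Nc : nat) (gamma : R) (h : 'rV[R]_np -> R) (x : 'rV[R]_(nx A))
  (c : 'rV[R]_np) (rho : R) (Jhat : R) (s : S) : Prop :=
  feasible Nn Nc h x c rho Jhat s /\
  forall s', feasible Nn Nc h x c rho Jhat s' -> Jobj Nn gamma s <= Jobj Nn gamma s'.

End Problem.

Definition conflict (R : realType) (np M : nat) (A : 'I_M -> agent R np)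
  (x : forall i, nat -> 'rV[R]_(nx (A i)))
  (Sc : 'I_M -> nat -> 'rV[R]_np) (SR : 'I_M -> nat -> R) (i : 'I_M) (t : nat) : Prop :=
  exists j : 'I_M, j != i /\
    (balls_meet (gen_c (A i) (x i t.+1)) (gen_R (A i) (x i t.+1))
                (gen_c (A j) (x j t.+1)) (gen_R (A j) (x j t.+1))
     \/ balls_meet (gen_c (A i) (x i t.+1)) (gen_R (A i) (x i t.+1)) (Sc j t) (SR j t)).

From HB Require Import structures.
From mathcomp Require Import all_boot all_order all_algebra.
From mathcomp Require Import all_classical all_reals all_analysis.
From mathcomp Require Import ring lra zify.
Set Implicit Arguments. Unset Strict Implicit. Unset Printing Implicit Defensive.
Import Order.TTheory GRing.Theory Num.Theory.
Import numFieldNormedType.Exports.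
Local Open Scope ring_scope.

(* The body of each agent stays inside its active safe set, since the applied
   contingency plan keeps the whole body inside it (C7) from its initial state
   on, and the active safe sets of distinct agents stay pairwise disjoint: a
   safe set is only shifted when the new tentative set meets neither the other
   tentative sets nor the other active sets.  Feasibility is recursive: the
   previous contingency plan advanced by one step and extended by its steady
   state satisfies (C1)-(C8) for the next problem, for the frozen safe set by
   (C7) and for the newly generated one by (C8), and its cost equals the
   updated bound because [lcont 0 0 = 0]; nominal completion supplies the
   nominal part. *)

Lemma CauchySchwarz_sum (R : realFieldType) n (a b : 'I_n -> R) :
  (\sum_k a k * b k) ^+ 2 <= (\sum_k a k ^+ 2) * (\sum_k b k ^+ 2).
Proof.
set S := \sum_k a k * b k; set A := \sum_k a k ^+ 2; set B := \sum_k b k ^+ 2.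
have B_ge0 : 0 <= B by apply: sumr_ge0 => k _; apply: sqr_ge0.
have [B_gt0 | B_le0] := ltrP 0 B.
  have expand : \sum_k (B * a k - S * b k) ^+ 2 = B * (A * B - S ^+ 2).
    rewrite (eq_bigr (fun k => B ^+ 2 * a k ^+ 2 - 2 * B * S * (a k * b k)
                               + S ^+ 2 * b k ^+ 2)); last by move=> k _; ring.
    rewrite big_split sumrB /= -!mulr_sumr -/A -/B -/S; ring.
  have : 0 <= B * (A * B - S ^+ 2).
    by rewrite -expand; apply: sumr_ge0 => k _; apply: sqr_ge0.
  by rewrite pmulr_rge0 // subr_ge0 mulrC.
have b0 k : b k = 0.
  have B0 : B = 0 by apply/eqP; rewrite eq_le B_le0 B_ge0.
  apply/eqP; rewrite -sqrf_eq0; apply/eqP.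
  exact: (psumr_eq0P (fun k _ => sqr_ge0 (b k)) B0).
have -> : S = 0 by rewrite /S big1 // => k _; rewrite b0 mulr0.
by rewrite expr0n /= mulr_ge0 ?sumr_ge0 // => k _; apply: sqr_ge0.
Qed.

Lemma ler_enormD (R : realType) n (u v : 'rV[R]_n) :
  enorm (u + v) <= enorm u + enorm v.
Proof.
rewrite /enorm.
set A := \sum_k u ord0 k ^+ 2; set B := \sum_k v ord0 k ^+ 2.
set S := \sum_(k < n) u ord0 k * v ord0 k.
have A_ge0 : 0 <= A by apply: sumr_ge0 => k _; apply: sqr_ge0.
have B_ge0 : 0 <= B by apply: sumr_ge0 => k _; apply: sqr_ge0.
have expand : \sum_k (u + v) ord0 k ^+ 2 = A + 2 * S + B.
  rewrite (eq_bigr (fun k => u ord0 k ^+ 2 + 2 * (u ord0 k * v ord0 k)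
                             + v ord0 k ^+ 2)); last by move=> k _; rewrite mxE; ring.
  by rewrite !big_split /= -mulr_sumr.
have S_le : S <= Num.sqrt A * Num.sqrt B.
  have : S ^+ 2 <= (Num.sqrt A * Num.sqrt B) ^+ 2.
    by rewrite exprMn !sqr_sqrtr //; apply: CauchySchwarz_sum.
  have := mulr_ge0 (sqrtr_ge0 A) (sqrtr_ge0 B); nra.
rewrite expand -(ger0_norm (addr_ge0 (sqrtr_ge0 A) (sqrtr_ge0 B))) -sqrtr_sqr.
by rewrite ler_sqrt ?sqr_ge0 // sqrrD !sqr_sqrtr //; lra.
Qed.

Lemma inball_trans (R : realType) n (c q p : 'rV[R]_n) (rho r : R) :
  inball c (rho - r) q -> inball q r p -> inball c rho p.
Proof.
rewrite /inball => cq qp.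
have -> : p - c = (p - q) + (q - c) by rewrite addrA subrK.
by apply: le_trans (@ler_enormD R n _ _) _; lra.
Qed.

Section ShiftedSolution.
Variables (R : realType) (np : nat) (A : agent R np) (Nc : nat).
Local Notation sol := (sol R (nx A) (nu A)).

Definition shift_sol (xn' : nat -> 'rV[R]_(nx A)) (un' : nat -> 'rV[R]_(nu A))
    (s : sol) : sol :=
  Sol xn' un' (fun k => xc s (minn k.+1 Nc))
    (fun k => if (k.+1 < Nc)%N then uc s k.+1 else ubar s) (xbar s) (ubar s).

Lemma Jc_shift_sol xn' un' (s : sol) :
  (0 < Nc)%N -> lcont A 0 0 = 0 -> xc s Nc = xbar s ->
  Jc Nc (shift_sol xn' un' s)
    = Jc Nc s - lcont A (xc s 0 - xbar s) (uc s 0 - ubar s).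
Proof.
move=> Nc_gt0 l00 xcN; rewrite /Jc /=.
have [N NcE] : exists N, Nc = N.+1 by exists Nc.-1; lia.
rewrite NcE in xcN *.
rewrite big_ord_recr big_ord_recl /= minnn ltnn xcN !subrr l00 addr0.
under eq_bigr => k _ do rewrite minnSS (minn_idPl (ltnW (ltn_ord k))) ltnS (ltn_ord k).
under [in RHS]eq_bigr => k _ do rewrite /bump /= add1n.
ring.
Qed.

Lemma feas_c_shift_sol {h x0 c rho J c' rho' xn' un'} {s : sol} :
  (0 < Nc)%N -> lcont A 0 0 = 0 -> 0 <= body_r A ->
  feas_c Nc h x0 c rho J s ->
  (forall k, (0 < k <= Nc)%N -> inball c' (rho' - body_r A) (position (xc s k))) ->
  feas_c Nc h (dynf A x0 (uc s 0)) c' rho'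
    (Jc Nc s - lcont A (x0 - xbar s) (uc s 0 - ubar s)) (shift_sol xn' un' s).
Proof.
move=> Nc_gt0 l00 r_ge0 [C1 [C2 [C3 [C4 [[xcN [steady [Xbar Ubar]]] [_ [_ [C8 _]]]]]]]].
move=> in_next; rewrite /feas_c /=.
have minS k : (k < Nc)%N -> minn k.+2 Nc = if (k.+1 < Nc)%N then k.+2 else Nc.
  by move=> kN; case: ifP => /= kN1; lia.
split; first by rewrite (minn_idPl Nc_gt0) -C1 C2.
split.
  move=> k kN; rewrite minS // (minn_idPl kN); case: ifP => [/C2 // | /negbT kN1].
  have -> : k.+1 = Nc by lia.
  by rewrite xcN.
split.
  move=> k kN; rewrite minS //; case: ifP => [/C3 // | _].
  by rewrite xcN.
split; first by move=> k _; apply: C4; rewrite geq_minr.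
split; first by rewrite (minn_idPr (leqnSn Nc)) xcN.
split.
  have := in_next Nc; rewrite Nc_gt0 leqnn xcN /inball => /(_ isT); lra.
split; first by move=> k kN; apply: in_next; lia.
split; first by move=> k l kl lN; apply: C8; lia.
by rewrite Jc_shift_sol // C1.
Qed.

(* Freeze: the old safe set still contains the tail of the contingency plan
   (C7).  Shift: the new safe set is generated at [xc s 1], and (C8) with
   [k = 1] says it contains the rest of the plan. *)
Lemma feas_c_recursive h x0 c rho J c' rho' xn' un' (s : sol) :
  (0 < Nc)%N -> lcont A 0 0 = 0 -> 0 <= body_r A ->
  feas_c Nc h x0 c rho J s ->
  let x1 := dynf A x0 (uc s 0) in
  (c', rho') = (c, rho) \/ (c', rho') = (gen_c A x1, gen_R A x1) ->
  feas_c Nc h x1 c' rho'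
    (Jc Nc s - lcont A (x0 - xbar s) (uc s 0 - ubar s)) (shift_sol xn' un' s).
Proof.
move=> Nc_gt0 l00 r_ge0 Fc x1 next; rewrite /x1.
apply: (feas_c_shift_sol Nc_gt0 l00 r_ge0 Fc).
have [C1 [C2 [_ [_ [_ [_ [C7 [C8 _]]]]]]]] := Fc.
have xc1 : xc s 1 = x1 by rewrite C2 // C1.
move=> k /andP[k_gt0 kN]; case: next => [[-> ->] | [-> ->]]; first exact: C7.
by rewrite -xc1; apply: C8.
Qed.

End ShiftedSolution.

Lemma balls_meet_sym (R : realType) n (c1 c2 : 'rV[R]_n) r1 r2 :
  balls_meet c1 r1 c2 r2 -> balls_meet c2 r2 c1 r1.
Proof. by case=> p [p1 p2]; exists p. Qed.

Section ClosedLoop.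
Variables (R : realType) (np M : nat) (A : 'I_M -> agent R np).
Variables (h : 'rV[R]_np -> R) (Nn Nc : nat) (gamma : R).
Variables (x : forall i, nat -> 'rV[R]_(nx (A i)))
  (Sc : 'I_M -> nat -> 'rV[R]_np) (SR : 'I_M -> nat -> R) (Jhat : 'I_M -> nat -> R)
  (s : forall i, nat -> sol R (nx (A i)) (nu (A i))).

Hypothesis Nc_gt0 : (0 < Nc)%N.
Hypothesis body_r_ge0 : forall i, 0 <= body_r (A i).
Hypothesis lcont00 : forall i, lcont (A i) 0 0 = 0.
Hypothesis s_optimal : forall i t,
  (exists s', feasible Nn Nc h (x i t) (Sc i t) (SR i t) (Jhat i t) s') ->
  optimal Nn Nc gamma h (x i t) (Sc i t) (SR i t) (Jhat i t) (s i t).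
Hypothesis x_next : forall i t, x i t.+1 = dynf (A i) (x i t) (uc (s i t) 0).
Hypothesis Jhat_next : forall i t, Jhat i t.+1 = Jc Nc (s i t)
  - lcont (A i) (x i t - xbar (s i t)) (uc (s i t) 0 - ubar (s i t)).
Hypothesis freeze : forall i t,
  conflict x Sc SR i t -> Sc i t.+1 = Sc i t /\ SR i t.+1 = SR i t.
Hypothesis shift : forall i t, ~ conflict x Sc SR i t ->
  Sc i t.+1 = gen_c (A i) (x i t.+1) /\ SR i t.+1 = gen_R (A i) (x i t.+1).
Hypothesis nominal_completion : forall i t (s' : sol R (nx (A i)) (nu (A i))),
  feas_c Nc h (x i t.+1) (Sc i t.+1) (SR i t.+1) (Jhat i t.+1) s' ->
  exists xn' un', feas_n Nn (x i t.+1)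
    (Sol xn' un' (xc s') (uc s') (xbar s') (ubar s')).

Definition feasible_at i t :=
  exists s', feasible Nn Nc h (x i t) (Sc i t) (SR i t) (Jhat i t) s'.

Definition safe_sets_disjoint t :=
  forall i j, i != j -> ~ balls_meet (Sc i t) (SR i t) (Sc j t) (SR j t).

Lemma feasible_at_next i t : feasible_at i t -> feasible_at i t.+1.
Proof.
move=> /s_optimal[[_ Fc] _].
have next : (Sc i t.+1, SR i t.+1) = (Sc i t, SR i t) \/
    (Sc i t.+1, SR i t.+1) = (gen_c (A i) (x i t.+1), gen_R (A i) (x i t.+1)).
  have [/freeze | /shift] := pselect (conflict x Sc SR i t) => -[-> ->]; by [left | right].
have Fc' : feas_c Nc h (x i t.+1) (Sc i t.+1) (SR i t.+1) (Jhat i t.+1)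
    (shift_sol Nc (xn (s i t)) (un (s i t)) (s i t)).
  rewrite x_next Jhat_next in next *.
  exact: feas_c_recursive Nc_gt0 (lcont00 i) (body_r_ge0 i) Fc next.
have [xn' [un' Fn']] := nominal_completion Fc'.
by exists (shift_sol Nc xn' un' (s i t)).
Qed.

Lemma safe_sets_disjoint_next t : safe_sets_disjoint t -> safe_sets_disjoint t.+1.
Proof.
move=> disj i j ij.
have ji : j != i by rewrite eq_sym.
have [ci | nci] := pselect (conflict x Sc SR i t);
  have [cj | ncj] := pselect (conflict x Sc SR j t).
- by have [-> ->] := freeze ci; have [-> ->] := freeze cj; apply: disj.
- have [-> ->] := freeze ci; have [-> ->] := shift ncj.
  by move=> /balls_meet_sym meet; apply: ncj; exists i; split => //; right.
- have [-> ->] := shift nci; have [-> ->] := freeze cj.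
  by move=> meet; apply: nci; exists j; split => //; right.
- have [-> ->] := shift nci; have [-> ->] := shift ncj.
  by move=> meet; apply: nci; exists j; split => //; left.
Qed.

Lemma body_in_safe_set i t : feasible_at i t ->
  inball (Sc i t) (SR i t - body_r (A i)) (position (x i t)).
Proof.
by move=> /s_optimal[[_ [C1 [_ [_ [_ [_ [_ [C7 _]]]]]]]] _]; rewrite -C1; apply: C7.
Qed.

Lemma collision_free :
  (forall i, feasible_at i 0) -> safe_sets_disjoint 0 ->
  forall t i j, i != j ->
    ~ balls_meet (position (x i t)) (body_r (A i)) (position (x j t)) (body_r (A j)).
Proof.
move=> feas0 disj0 t.
have [feas disj] : (forall i, feasible_at i t) /\ safe_sets_disjoint t.
  elim: t => [// | t [feas disj]].
  by split; [move=> i; apply: feasible_at_next | apply: safe_sets_disjoint_next].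
move=> i j ij [p [pi pj]]; apply: (disj i j ij); exists p.
by split; [apply: inball_trans (body_in_safe_set (feas i)) pi
          | apply: inball_trans (body_in_safe_set (feas j)) pj].
Qed.

End ClosedLoop.

Theorem theorem2 (R : realType) (np M : nat) (A : 'I_M -> agent R np)
  (h : 'rV[R]_np -> R) (Nn Nc : nat) (gamma : R)
  (x : forall i, nat -> 'rV[R]_(nx (A i)))
  (Sc : 'I_M -> nat -> 'rV[R]_np) (SR : 'I_M -> nat -> R)
  (Jhat : 'I_M -> nat -> R)
  (s : forall i, nat -> sol R (nx (A i)) (nu (A i))) :
  continuous h -> (0 < Nn)%N -> (0 < Nc)%N -> 0 < gamma ->
  (forall i, 0 < body_r (A i)) ->
  (forall i a b, 0 <= Voff (A i) a b) ->
  (forall i a b, 0 <= lcont (A i) a b) ->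
  (forall i, 0 <= Jhat i 0) ->
  (* closed loop: the applied solution is an optimal solution of P_i(t) *)
  (forall i t, (exists s', feasible Nn Nc h (x i t) (Sc i t) (SR i t) (Jhat i t) s') ->
     optimal Nn Nc gamma h (x i t) (Sc i t) (SR i t) (Jhat i t) (s i t)) ->
  (forall i t, x i t.+1 = dynf (A i) (x i t) (uc (s i t) 0)) ->
  (forall i t, Jhat i t.+1 = Jc Nc (s i t)
      - lcont (A i) (x i t - xbar (s i t)) (uc (s i t) 0 - ubar (s i t))) ->
  (* freeze-or-shift update *)
  (forall i t, conflict x Sc SR i t -> Sc i t.+1 = Sc i t /\ SR i t.+1 = SR i t) ->
  (forall i t, ~ conflict x Sc SR i t ->
     Sc i t.+1 = gen_c (A i) (x i t.+1) /\ SR i t.+1 = gen_R (A i) (x i t.+1)) ->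
  (* (i) *)
  (forall i, exists s', feasible Nn Nc h (x i 0) (Sc i 0) (SR i 0) (Jhat i 0) s') ->
  (forall i j, i != j -> ~ balls_meet (Sc i 0) (SR i 0) (Sc j 0) (SR j 0)) ->
  (* (ii) nominal completion *)
  (forall i t (s' : sol R (nx (A i)) (nu (A i))),
     feas_c Nc h (x i t.+1) (Sc i t.+1) (SR i t.+1) (Jhat i t.+1) s' ->
     exists xn' un', feas_n Nn (x i t.+1)
        (Sol xn' un' (xc s') (uc s') (xbar s') (ubar s'))) ->
  (* (iii) *)
  (forall i, lcont (A i) 0 0 = 0) ->
  forall t (i j : 'I_M), i != j ->
    ~ balls_meet (position (x i t)) (body_r (A i)) (position (x j t)) (body_r (A j)).
Proof.
move=> _ _ Nc_gt0 _ r_gt0 _ _ _ s_opt x_next Jhat_next freeze shift feas0 disj0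
  completion lcont00.
apply: (collision_free Nc_gt0 _ lcont00 s_opt x_next Jhat_next freeze shift
  completion feas0 disj0) => i.
exact: ltW.
Qed.
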